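(* Let $\mathcal{P}\subset K[x_1,\ldots,x_n]$ be a chordal polynomial set with $x_1<\cdots<x_n$ as a perfect elimination ordering. Let $\overline{\mathrm{red}}_n(\mathcal{P}),\ldots,\overline{\mathrm{red}}_1(\mathcal{P})$ be any successive reduction of $\mathcal{P}$, with arbitrary valid reduction data at each step. Then for each $i\in\{n,\ldots,1\}$ and any two distinct variables $x_p,x_q$ the following holds: if there is an integer $k$ with $x_p,x_q\in\mathrm{supp}\big(\overline{\mathrm{red}}_i(\mathcal{P})^{(k)}\big)$, then $\{x_p,x_q\}$ is an edge of $G(\mathcal{P})$.
   Context: Let $K$ be a field and $K[x_1,\ldots,x_n]$ the polynomial ring, with the variables ordered $x_1<\cdots<x_n$. For a polynomial $F$, $\mathrm{supp}(F)$ is the set of variables effectively appearing in $F$. For a set of polynomials $\mathcal{P}$, $\mathrm{supp}(\mathcal{P})=\bigcup_{F\in\mathcal{P}}\mathrm{supp}(F)$. For a nonconstant $F$, $\mathrm{lv}(F)$ is the greatest variable in $\mathrm{supp}(F)$. For a polynomial set $\mathcal{P}$ and $1\le i\le n$, $\mathcal{P}^{(i)}=\{P\in\mathcal{P}:\mathrm{lv}(P)=x_i\}$; constants belong to no $\mathcal{P}^{(i)}$. The associated graph $G(\mathcal{P})$ is the undirected graph whose vertex set is $\mathrm{supp}(\mathcal{P})$, with an edge between distinct $x_i,x_j$ iff some $F\in\mathcal{P}$ has $x_i,x_j\in\mathrm{supp}(F)$. An ordering of the vertices of a graph is a perfect elimination ordering if, for every vertex $v$, the set consisting of $v$ and all neighbours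 of $v$ smaller than $v$ is a clique. A polynomial set $\mathcal{P}$ is called chordal with $x_1<\cdots<x_n$ as a perfect elimination ordering if the restriction of this ordering to $\mathrm{supp}(\mathcal{P})$ is a perfect elimination ordering of $G(\mathcal{P})$. Reduction step: let $\mathcal{S}$ be a polynomial set and $1\le i\le n$ with $\mathcal{S}^{(i)}\neq\emptyset$. Reduction data for $(\mathcal{S},i)$ is a pair $(T_i,\mathcal{R}_i)$ such that: - $T_i\in K[x_1,\ldots,x_i]\setminus K[x_1,\ldots,x_{i-1}]$ and $\mathcal{R}_i\subset K[x_1,\ldots,x_{i-1}]$, where $K[x_1,\ldots,x_0]=K$; - $\mathrm{supp}(T_i)\subseteq\mathrm{supp}(\mathcal{S}^{(i)})$ and $\mathrm{supp}(\mathcal{R}_i)\subseteq\mathrm{supp}(\mathcal{S}^{(i)})$. Given such a pair, $$\mathrm{red}_i(\mathcal{S})=\bigcup_{j>i}\mathcal{S}^{(j)}\ \cup\ \{T_i\}\ \cup\ \bigcup_{j<i}\big(\mathcal{S}^{(j)}\cup\mathcal{R}_i^{(j)}\big).$$ If $\mathcal{S}^{(i)}=\emptyset$, set $\mathrm{red}_i(\mathcal{S})=\bigcup_{j}\mathcal{S}^{(j)}$. Successive reduction: $\overline{\mathrm{red}}_{n+1}(\mathcal{P})=\mathcal{P}$ and $\overline{\mathrm{red}}_i(\mathcal{P})=\mathrm{red}_i(\overline{\mathrm{red}}_{i+1}(\mathcal{P}))$ for $i=n,\ldots,1$. At each step some reduction data for $(\overline{\mathrm{red}}_{i+1}(\mathcal{P}),i)$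 is chosen. *)

(* Variable x_{i+1} of the paper is the ordinal i : 'I_n (0-based),
   and the variable order x_1 < ... < x_n is the order of ordinals. *)
From HB Require Import structures.
From mathcomp Require Import all_boot all_order all_algebra.
Set Implicit Arguments. Unset Strict Implicit. Unset Printing Implicit Defensive.
Import GRing.Theory.
Local Open Scope ring_scope.

Section MPoly.
Variables (K : fieldType) (n : nat).

Definition mono := {ffun 'I_n -> nat}.

Record mpoly := MPoly {
  mcoef : mono -> K;
  mfin : exists s : seq mono, forall m, mcoef m != 0 -> m \in s }.

Definition in_supp (F : mpoly) (i : 'I_n) : Prop :=
  exists m : mono, mcoef F m != 0 /\ (0 < m i)%N.

Definition pset := mpoly -> Prop.

Definition lv_is (F : mpoly) (i : 'I_n) : Prop :=
  in_supp F i /\ forall j, in_supp F j -> (j <= i)%N.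

Definition level (P : pset) (i : 'I_n) : pset :=
  fun F => P F /\ lv_is F i.

Definition in_supp_set (P : pset) (i : 'I_n) : Prop :=
  exists F, P F /\ in_supp F i.

Definition adj (P : pset) (p q : 'I_n) : Prop :=
  p <> q /\ exists F, P F /\ in_supp F p /\ in_supp F q.

(* x_1 < ... < x_n (restricted to supp P) is a perfect elimination ordering
   of G(P): for every vertex v, v together with its smaller neighbours
   forms a clique. *)
Definition chordal_peo (P : pset) : Prop :=
  forall v : 'I_n, in_supp_set P v ->
    forall u w : 'I_n,
      (u = v \/ (adj P u v /\ (u < v)%N)) ->
      (w = v \/ (adj P w v /\ (w < v)%N)) ->
      u <> w -> adj P u w.

Definition red_data (S : pset) (i : 'I_n) (T : mpoly) (R : pset) : Prop :=
  (in_supp T i /\ forall j, in_supp T j -> (j <= i)%N) /\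
  (forall G, R G -> forall j, in_supp G j -> (j < i)%N) /\
  (forall j, in_supp T j -> in_supp_set (level S i) j) /\
  (forall G, R G -> forall j, in_supp G j -> in_supp_set (level S i) j).

Definition red_with (S : pset) (i : 'I_n) (T : mpoly) (R : pset) : pset :=
  fun F =>
    (exists j : 'I_n, (i < j)%N /\ level S j F) \/
    F = T \/
    (exists j : 'I_n, (j < i)%N /\ (level S j F \/ level R j F)).

Definition nonconst_part (S : pset) : pset :=
  fun F => exists j : 'I_n, level S j F.

Definition is_red (S : pset) (i : 'I_n) (S' : pset) : Prop :=
  ((forall F, ~ level S i F) -> forall F, S' F <-> nonconst_part S F) /\
  ((exists F, level S i F) ->
     exists T R, red_data S i T R /\ forall F, S' F <-> red_with S i T R F).

(* Successive reduction: Sr k (0-based) stands for \overline{red}_{k+1}(P),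
   Sr n = \overline{red}_{n+1}(P) = P,
   Sr i = red_{i+1}(Sr (i+1)) for i : 'I_n (variable x_{i+1}). *)
Definition successive_reduction (P : pset) (Sr : nat -> pset) : Prop :=
  (forall F, Sr n F <-> P F) /\
  forall i : 'I_n, is_red (Sr i.+1) i (Sr i).

End MPoly.

(* Call a polynomial set S "level-clique" (relative to P) when any two distinct
   variables occurring together in some level S^(k) are adjacent in G(P).
   P itself is level-clique: every variable of a polynomial of level x_k is x_k
   or a smaller neighbour of x_k, and these form a clique by the perfect
   elimination property.  A reduction step at x_i preserves the property: a
   variable of a new level S'^(k) either already occurs in S^(k), or occurs in
   S^(i) together with x_k and is at most x_k.  The only new pairs are thus
   x_p in S^(k) and x_q, x_k in S^(i); then x_p ~ x_k and x_q ~ x_k with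
   x_p, x_q < x_k, so x_p ~ x_q by the perfect elimination property at x_k. *)
From HB Require Import structures.
From mathcomp Require Import all_boot all_order all_algebra.
From Stdlib Require Import Classical.

Section LevelClique.
Set Implicit Arguments.
Unset Strict Implicit.
Variables (K : fieldType) (n : nat).
Implicit Types (P S : pset K n) (F T : mpoly K n) (i j k p q r : 'I_n).

Definition level_clique P S : Prop :=
  forall k p q, p <> q ->
    in_supp_set (level S k) p -> in_supp_set (level S k) q -> adj P p q.

Lemma lv_is_uniq F i j : lv_is F i -> lv_is F j -> i = j.
Proof. by move=> [Fi le_i] [Fj le_j]; apply/val_inj/eqP; rewrite eqn_leq le_i ?le_j. Qed.

Lemma adj_sym P p q : adj P p q -> adj P q p.
Proof. by move=> [pq [F [PF [Fp Fq]]]]; split; [auto | exists F]. Qed.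

Lemma supp_level_le S k p : in_supp_set (level S k) p -> (p <= k)%N.
Proof. by move=> [F [[_ [_ le_k]] Fp]]; apply: le_k. Qed.

Lemma supp_level_lv S k p : in_supp_set (level S k) p -> in_supp_set (level S k) k.
Proof. by move=> [F [[SF [Fk le_k]] _]]; exists F. Qed.

Lemma supp_level_ext S S' k p : (forall F, S' F <-> S F) ->
  in_supp_set (level S' k) p -> in_supp_set (level S k) p.
Proof. by move=> eqS [F [[/eqS SF lvF] Fp]]; exists F. Qed.

Lemma ord_neq_leq_ltn k r : r <> k -> (r <= k)%N -> (r < k)%N.
Proof. by move=> rk; rewrite ltn_neqAle => ->; rewrite andbT; apply/eqP => /val_inj. Qed.

Lemma adj_lv_of_supp P F k r : P F -> lv_is F k -> in_supp F r -> r <> k ->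
  adj P r k /\ (r < k)%N.
Proof.
move=> PF [Fk le_k] Fr rk; split; first by split=> //; exists F.
exact: ord_neq_leq_ltn rk (le_k r Fr).
Qed.

Lemma chordal_level_clique P : chordal_peo P -> level_clique P P.
Proof.
move=> peoP k p q pq [F [[PF lvF] Fp]] [G [[PG lvG] Gq]].
have Pk : in_supp_set P k by exists F; case: lvF.
apply: (peoP k Pk) => //.
- by case: (eqVneq p k) => [|/eqP pk]; [left | right; apply: (adj_lv_of_supp PF)].
- by case: (eqVneq q k) => [|/eqP qk]; [left | right; apply: (adj_lv_of_supp PG)].
Qed.

Lemma supp_level_nonconst S k r :
  in_supp_set (level (nonconst_part S) k) r -> in_supp_set (level S k) r.
Proof.
by move=> [F [[[j [SF lvj]] lvk] Fr]]; rewrite (lv_is_uniq lvk lvj); exists F.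
Qed.

Lemma supp_level_red_with S i T R k r : red_data S i T R ->
  in_supp_set (level (red_with S i T R) k) r ->
  in_supp_set (level S k) r \/
  [/\ in_supp_set (level S i) r, in_supp_set (level S i) k & (r <= k)%N].
Proof.
move=> [[Ti le_i] [_ [suppT suppR]]] [F [[redF lvk] Fr]].
have rk : (r <= k)%N by case: lvk => _; apply.
case: redF => [[j [_ [SF lvj]]] | [EF | [j [_ [[SF lvj] | [RF lvj]]]]]].
- by left; rewrite (lv_is_uniq lvk lvj); exists F.
- by subst F; right; rewrite -(lv_is_uniq (conj Ti le_i) lvk) in rk *; split=> //; apply: suppT.
- by left; rewrite (lv_is_uniq lvk lvj); exists F.
- have Ejk := lv_is_uniq lvj lvk; subst k.
  by right; split=> //; apply: (suppR F) => //; case: lvj.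
Qed.

Section ReductionStep.
Variables (P S : pset K n).
Hypotheses (peoP : chordal_peo P) (cliqueS : level_clique P S).

Lemma adj_across_levels i k p q :
  in_supp_set (level S k) p -> in_supp_set (level S i) q ->
  in_supp_set (level S i) k -> (q <= k)%N -> p <> q -> adj P p q.
Proof.
move=> Sk_p Si_q Si_k le_qk pq.
have Sk_k := supp_level_lv Sk_p.
have [pk | /eqP neq_pk] := eqVneq p k.
  by subst p; apply: adj_sym; exact: cliqueS (nesym pq) Si_q Si_k.
have [qk | /eqP neq_qk] := eqVneq q k.
  by subst q; apply: (cliqueS pq Sk_p Sk_k).
have pk_adj : adj P p k := cliqueS neq_pk Sk_p Sk_k.
have Pk : in_supp_set P k by case: pk_adj => _ [F [PF [_ Fk]]]; exists F.
apply: (peoP Pk); [right | right | by []]; split=> //.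
- exact: ord_neq_leq_ltn neq_pk (supp_level_le Sk_p).
- exact: cliqueS neq_qk Si_q Si_k.
- exact: ord_neq_leq_ltn neq_qk le_qk.
Qed.

Lemma red_with_level_clique i T R :
  red_data S i T R -> level_clique P (red_with S i T R).
Proof.
move=> dataTR k p q pq /(supp_level_red_with dataTR) Hp /(supp_level_red_with dataTR) Hq.
case: Hp => [Sk_p | [Si_p Si_k pk]]; case: Hq => [Sk_q | [Si_q Si_k' qk]].
- exact: (cliqueS pq Sk_p Sk_q).
- exact: (adj_across_levels Sk_p Si_q Si_k').
- by apply/adj_sym/(adj_across_levels Sk_q Si_p Si_k); auto.
- exact: (cliqueS pq Si_p Si_q).
Qed.

Lemma is_red_level_clique i S' : is_red S i S' -> level_clique P S'.
Proof.
move=> [emptyS nonemptyS] k p q pq Hp Hq.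
have [/nonemptyS [T [R [dataTR eqS']]] | noSi] := classic (exists F, level S i F).
  exact (red_with_level_clique dataTR pq (supp_level_ext eqS' Hp) (supp_level_ext eqS' Hq)).
have eqS' := emptyS (fun F SiF => noSi (ex_intro _ F SiF)).
exact (cliqueS pq (supp_level_nonconst (supp_level_ext eqS' Hp))
                   (supp_level_nonconst (supp_level_ext eqS' Hq))).
Qed.

End ReductionStep.

Lemma successive_reduction_level_clique P Sr :
  chordal_peo P -> successive_reduction P Sr ->
  forall d, (d <= n)%N -> level_clique P (Sr (n - d)%N).
Proof.
move=> peoP [SrnP redSr]; elim=> [_ | d IHd lt_dn].
  rewrite subn0 => k p q pq Hp Hq.
  exact (chordal_level_clique peoP pq (supp_level_ext SrnP Hp) (supp_level_ext SrnP Hq)).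
have lt_n : (n - d.+1 < n)%N by rewrite ltn_subrL (leq_ltn_trans _ lt_dn).
have := redSr (Ordinal lt_n); rewrite /= subnSK // => red_d.
exact (is_red_level_clique peoP (IHd (ltnW lt_dn)) red_d).
Qed.

End LevelClique.

Theorem lemma3p4 (K : fieldType) (n : nat) (P : pset K n) (Sr : nat -> pset K n) :
  chordal_peo P ->
  successive_reduction P Sr ->
  forall i : 'I_n, forall p q : 'I_n, p <> q ->
    (exists k : 'I_n, in_supp_set (level (Sr i) k) p /\
                      in_supp_set (level (Sr i) k) q) ->
    adj P p q.
Proof.
move=> peoP redSr i p q pq [k [Hp Hq]].
have := successive_reduction_level_clique peoP redSr (leq_subr i n).
rewrite subKn; last exact: ltnW.
by move=> cliqueSr; apply: (cliqueSr k).
Qed.
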